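(* Let $X$ be a subshift with shift map $\sigma$ and let $\mu$ be a $\sigma$-invariant Borel probability measure on $X$. For $x \in X$ and $n\in\mathbb{N}$ let $P_n(x) = \{y\in X: y_i = x_i \text{ for } 0\le i<n\}$ and $R_n(x) = \inf\{k>0 : x_{[k,k+n)} = x_{[0,n)}\}$. Suppose that for $\mu$-a.e. $x \in X$ the quantity $\limsup_{n\to\infty} -\frac{1}{n^{\beta}}\log\mu(P_n(x))$, as a function of $\beta>0$, has critical value $c$. Then for $\mu$-a.e. $x\in X$ the critical value of $\limsup_{n\to\infty}\frac{1}{n^{\beta}}\log R_n(x)$ (as a function of $\beta>0$) is at most $c$; that is, $\limsup_{n\to\infty}\frac{1}{n^{\beta}}\log R_n(x) = 0$ for every $\beta>c$.
   Context: Critical value: for a family of quantities $F(\beta)\in[0,\infty]$ indexed by $\beta>0$, we say $F$ has critical value $c$ if $F(\beta) = \infty$ for all $0<\beta<c$ and $F(\beta) = 0$ for all $\beta > c$. *)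

From HB Require Import structures.
From mathcomp Require Import all_boot all_order all_algebra.
From mathcomp Require Import all_classical all_reals all_analysis.
Set Implicit Arguments. Unset Strict Implicit. Unset Printing Implicit Defensive.
Import Order.TTheory GRing.Theory Num.Theory.
Local Open Scope classical_set_scope.
Local Open Scope ring_scope.

(* One-sided sequences over a finite (nonempty, witnessed by a0) alphabet A. *)
Definition seqs (A : Type) (a0 : A) : Type := nat -> A.

Section Seqs.
Variables (A : finType) (a0 : A).
HB.instance Definition _ := Choice.on (seqs a0).
HB.instance Definition _ := isPointed.Build (seqs a0) (fun _ => a0).

Definition cyl (n : nat) (x : seqs a0) : set (seqs a0) :=
  [set y | forall i, (i < n)%N -> y i = x i].

Definition cylinders : set (set (seqs a0)) :=
  [set C | exists n x, C = cyl n x].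

(* The full shift with the sigma-algebra generated by cylinders
   (= Borel sigma-algebra of the product of discrete topologies). *)
Definition shiftspace := g_sigma_algebraType cylinders.

Definition sshift (x : shiftspace) : shiftspace := fun i => x i.+1.

(* X is closed in the product topology (discrete alphabet), written out. *)
Definition seq_closed (X : set shiftspace) : Prop :=
  forall x : shiftspace, (forall n, exists2 y, X y & cyl n x y) -> X x.

Definition subshift (X : set shiftspace) : Prop :=
  seq_closed X /\ (forall x, X x -> X (sshift x)).

Definition P (X : set shiftspace) (n : nat) (x : shiftspace) : set shiftspace :=
  X `&` cyl n x.

(* first return time R_n(x) = inf {k > 0 : x_[k,k+n) = x_[0,n)}, in \bar R
   (+oo when no such k) *)
Definition return_time {R : realType} (n : nat) (x : shiftspace) : \bar R :=
  ereal_inf [set (k%:R)%:E | k in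
     [set k : nat | (0 < k)%N /\ forall i, (i < n)%N -> x (k + i) = x i]].
End Seqs.

Section Quantities.
Variables (R : realType) (A : finType) (a0 : A).

Definition neglog_meas (mu : {measure set (shiftspace a0) -> \bar R})
    (X : set (shiftspace a0)) (x : shiftspace a0) (beta : R) (n : nat) : \bar R :=
  if mu (P X n x) == 0%E then +oo%E
  else (- ln (fine (mu (P X n x))) / (n%:R `^ beta))%:E.

Definition log_return (x : shiftspace a0) (beta : R) (n : nat) : \bar R :=
  match (return_time n x : \bar R) with
  | r%:E => (ln r / (n%:R `^ beta))%:E
  | +oo%E => +oo%E
  | -oo%E => -oo%E
  end.
End Quantities.

Definition critical_value {R : realType} (F : R -> \bar R) (c : R) : Prop :=
  (forall beta, 0 < beta -> beta < c -> F beta = +oo%E) /\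
  (forall beta, c < beta -> F beta = 0%E).

From HB Require Import structures.
From mathcomp Require Import all_boot all_order all_algebra.
From mathcomp Require Import all_classical all_reals all_analysis.
From mathcomp Require Import lra ring.
Import Order.TTheory GRing.Theory Num.Theory.
Local Open Scope classical_set_scope.
Local Open Scope ring_scope.
Set Implicit Arguments. Unset Strict Implicit. Unset Printing Implicit Defensive.

(* Kac's lemma: inside a set B, the points whose first return to B takes at
   least m steps have measure at most 1/m. Apply it to the cylinder [w] of
   every word w of length n with m of order K_n / mu[w], K_n = (n+1)(n+2):
   summing over w, the set of x with R_n(x) >= K_n / mu(P_n(x)) has measure
   at most 1/K_n, which is summable. By Borel-Cantelli, almost every x
   eventually satisfies log R_n(x) <= log K_n - log mu(P_n(x)); divided by
   n^beta, the first term tends to 0 and the second has limsup 0 when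
   beta > c. If c < beta <= 0, the hypothesis forces mu(P_n(x)) > 1/2 for
   large n, so P_{n+1}(x) meets the shift-preimage of P_n(x), which makes x
   constant and R_n(x) = 1. *)

Section Cylinders.
Variables (A : finType) (a0 : A).
Local Notation T := (shiftspace a0).
Local Notation cyl := (@cyl A a0).

Definition determined_by (N : nat) (S : set T) : Prop :=
  forall x y : T, (forall i, (i < N)%N -> x i = y i) -> S x -> S y.

Definition word_seq N (w : {ffun 'I_N -> A}) : T :=
  fun i => if (insub i : option 'I_N) is Some j then w j else a0.

Definition word_of N (x : T) : {ffun 'I_N -> A} := [ffun j : 'I_N => x j].

Lemma word_seqE N (w : {ffun 'I_N -> A}) i (hi : (i < N)%N) :
  word_seq w i = w (Ordinal hi).
Proof. by rewrite /word_seq insubT. Qed.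

Lemma word_seq_ord N (w : {ffun 'I_N -> A}) (j : 'I_N) : word_seq w j = w j.
Proof. by rewrite (word_seqE w (ltn_ord j)); congr (w _); apply: val_inj. Qed.

Lemma cyl_word_of N (x : T) : cyl N (word_seq (word_of N x)) = cyl N x.
Proof.
by apply/seteqP; split => y cy i hi; rewrite cy // (word_seqE _ hi) ffunE.
Qed.

Lemma cyl_word_inj N (w w' : {ffun 'I_N -> A}) (y : T) :
  cyl N (word_seq w) y -> cyl N (word_seq w') y -> w = w'.
Proof.
move=> cw cw'; apply/ffunP => j.
by rewrite -!word_seq_ord -(cw j (ltn_ord j)) -(cw' j (ltn_ord j)).
Qed.

Lemma trivIset_word_cyl N (F : {ffun 'I_N -> A} -> set T) :
  (forall w, F w `<=` cyl N (word_seq w)) -> trivIset setT F.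
Proof.
move=> hF; apply/trivIsetP => w w' _ _ nww'.
apply/seteqP; split => // y [/hF cw /hF cw'].
by rewrite (cyl_word_inj cw cw') eqxx in nww'.
Qed.

Lemma bigcup_word_cyl N (S : set T) :
  \bigcup_(w in [set: {ffun 'I_N -> A}]) (S `&` cyl N (word_seq w)) = S.
Proof.
apply/seteqP; split => [x [w _ []] //|x Sx].
by exists (word_of N x) => //; split; rewrite // cyl_word_of.
Qed.

Lemma cyl_determined N (x : T) : determined_by N (cyl N x).
Proof. by move=> y z yz cy i hi; rewrite -yz // cy. Qed.

Lemma cyl_measurable N (x : T) : measurable (cyl N x : set T).
Proof. by apply: sub_sigma_algebra; exists N, x. Qed.

Lemma determined_measurable N (S : set T) : determined_by N S -> measurable S.
Proof.
move=> hS.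
have -> : S = \bigcup_(w in [set w : {ffun 'I_N -> A} | S (word_seq w)]) cyl N (word_seq w).
  apply/seteqP; split => [x Sx|x [w Sw cx]]; last first.
    by apply: hS Sw => i hi; rewrite cx.
  exists (word_of N x); last by rewrite cyl_word_of.
  by apply: hS Sx => i hi; rewrite (word_seqE _ hi) ffunE.
apply: fin_bigcup_measurable; first exact: finite_finset.
by move=> w _; exact: cyl_measurable.
Qed.

Lemma seq_closed_measurable (X : set T) : seq_closed X -> measurable X.
Proof.
move=> cX.
have -> : X = \bigcap_(N in [set: nat]) [set y | exists2 z, X z & cyl N y z].
  apply/seteqP; split => [x Xx N _|x hx]; first by exists x.
  by apply: cX => n; exact: hx n I.
apply: bigcapT_measurable => N; apply: (@determined_measurable N).
by move=> x y xy [z Xz cz]; exists z => // i hi; rewrite cz // xy.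
Qed.

Definition shiftn (k : nat) (y : T) : T := fun i => y (k + i)%N.

Lemma shiftn0 (y : T) : shiftn 0 y = y.
Proof. by apply/funext => i; rewrite /shiftn add0n. Qed.

Lemma shiftnS k (y : T) : shiftn k.+1 y = shiftn k (sshift y).
Proof. by apply/funext => i; rewrite /shiftn /sshift addSn. Qed.

Lemma shiftnD j k (y : T) : shiftn j (shiftn k y) = shiftn (k + j) y.
Proof. by apply/funext => i; rewrite /shiftn addnA. Qed.

Lemma determined_shiftn k N (S : set T) :
  determined_by N S -> determined_by (k + N) (shiftn k @^-1` S).
Proof. by move=> hS x y xy; apply: hS => i hi; rewrite /shiftn xy // ltn_add2l. Qed.

Definition late_return (B : set T) (m : nat) : set T :=
  [set y | B y /\ forall k, (0 < k)%N -> (k < m)%N -> ~ B (shiftn k y)].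

Lemma determined_late_return n (B : set T) m :
  determined_by n B -> determined_by (m + n) (late_return B m).
Proof.
move=> hB x y xy [Bx nret]; split.
  by apply: hB Bx => i hi; rewrite xy // ltn_addl.
move=> k k0 km Bky; apply: (nret k k0 km); apply: hB Bky => i hi.
by rewrite /shiftn xy // -addSn leq_add // ltnW.
Qed.

Lemma trivIset_late_return (B : set T) m :
  trivIset setT (fun j : 'I_m => shiftn j @^-1` late_return B m).
Proof.
apply/trivIsetP => i j _ _ nij.
wlog lij : i j nij / (i < j)%N.
  move=> H; have [lij|lji|eij] := ltngtP i j; first exact: H.
    by rewrite setIC; apply: H => //; rewrite eq_sym.
  by move/val_inj: eij => eij; rewrite eij eqxx in nij.
apply/seteqP; split => // y [[_ Li] [Lj _]].
apply: (Li (j - i)%N); first by rewrite subn_gt0.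
  by rewrite (leq_ltn_trans (leq_subr _ _)).
by rewrite shiftnD subnKC // ltnW.
Qed.
End Cylinders.

Arguments word_seq {A a0 N}.
Arguments cyl_determined {A a0} N x.
Arguments determined_shiftn {A a0} k {N S}.
Arguments determined_late_return {A a0 n B} m.

Lemma probability_setI_neq0 d (T : measurableType d) (R : realType)
    (mu : probability T R) (B C : set T) :
  measurable B -> measurable C -> (1 < mu B + mu C)%E -> B `&` C !=set0.
Proof.
move=> mB mC h; apply/set0P/negP => /eqP BC0.
have := probability_le1 mu (measurableU _ _ mB mC).
by rewrite measureU // leNgt h.
Qed.

Definition kac_scale {R : numDomainType} (n : nat) : R := (n.+1 * n.+2)%:R.

Lemma kac_scale_gt0 (R : numDomainType) n : 0 < kac_scale n :> R.
Proof. by rewrite ltr0n muln_gt0. Qed.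

Lemma kac_scale_partial_sum (R : realType) N :
  (\sum_(0 <= k < N) ((kac_scale k : R)^-1)%:E = (1 - N.+1%:R^-1)%:E)%E.
Proof.
elim: N => [|N IH]; first by rewrite big_geq // invr1 subrr.
rewrite big_nat_recr //= IH -EFinD /kac_scale; congr (_%:E).
rewrite natrM; field.
by have := ler0n R N => hN; apply/andP; split; apply/eqP; lra.
Qed.

Lemma kac_scale_series_le1 (R : realType) :
  (\sum_(k <oo) ((kac_scale k : R)^-1)%:E <= 1)%E.
Proof.
apply: lime_le.
  by apply: is_cvg_nneseries => n _ _; rewrite lee_fin invr_ge0 ltW // kac_scale_gt0.
by apply: nearW => N; rewrite kac_scale_partial_sum lee_fin lerBlDr lerDl invr_ge0.
Qed.

Lemma limn_esup_lt_near (R : realType) (u : (\bar R)^nat) (l : \bar R) :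
  (limn_esup u < l)%E -> \forall n \near \oo, (u n < l)%E.
Proof.
rewrite /limn_esup limf_esupE => /ereal_inf_lt [_ [V hV <-]] hlt.
apply: filterS hV => n Vn; apply: le_lt_trans hlt.
by apply: ereal_sup_ubound; exists n.
Qed.

Lemma limn_esup_eq0 (R : realType) (u : (\bar R)^nat) :
  (forall n, (0 <= u n)%E) ->
  (forall e : R, 0 < e -> \forall n \near \oo, (u n <= e%:E)%E) ->
  limn_esup u = 0%E.
Proof.
move=> u0 h; apply/eqP; rewrite eq_le; apply/andP; split; last first.
  by apply: limf_esup_ge0 => //; case => N _ hN; apply: (hN N).
apply/lee_addgt0Pr => e e0; rewrite add0e /limn_esup limf_esupE.
apply: (@le_trans _ _ (ereal_sup (u @` [set n | (u n <= e%:E)%E]))).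
  by apply: ereal_inf_lbound; exists [set n | (u n <= e%:E)%E] => //; exact: h.
by apply: ge_ereal_sup => _ [n hn <-].
Qed.

Lemma ln_le_powR (R : realType) (s b : R) : 0 < s -> 0 < b -> ln s <= s `^ b / b.
Proof.
move=> s0 b0; rewrite ler_pdivlMr // mulrC -ln_powR.
exact/ltW/ln_sublinear/powR_gt0.
Qed.

Lemma powR_nat_ge_near (R : realType) (b M : R) : 0 < b ->
  \forall n \near \oo, M <= n%:R `^ b.
Proof.
move=> b0; exists (Num.truncn (`|M| `^ b^-1)).+1 => // n /= hn.
apply: le_trans (ler_norm M) _.
have -> : `|M| = (`|M| `^ b^-1) `^ b by rewrite -powRrM mulVf ?gt_eqF ?powRr1.
apply: ge0_ler_powR; [exact: ltW | by rewrite nnegrE powR_ge0 | by rewrite nnegrE ler0n |].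
by apply/ltW/(lt_le_trans (truncnS_gt _)); rewrite ler_nat.
Qed.

Lemma ln_kac_scale_le (R : realType) n : (0 < n)%N ->
  ln (kac_scale n : R) <= ln 6 + 2 * ln n%:R.
Proof.
move=> n0; have n1 : 1 <= n%:R :> R by rewrite ler1n.
apply: (@le_trans _ _ (ln (6 * (n%:R * n%:R)))).
  rewrite ler_ln ?posrE ?kac_scale_gt0 //; last by nra.
  by rewrite /kac_scale natrM -!natr1; nra.
by rewrite !lnM ?posrE ?mulr_gt0 //; lra.
Qed.

Lemma ln_kac_scale_small (R : realType) (beta e : R) : 0 < beta -> 0 < e ->
  \forall n \near \oo, ln (kac_scale n : R) / n%:R `^ beta <= e.
Proof.
(* with t = n^(beta/2): ln K_n <= ln 6 + g t <= C t <= e t^2 once t >= 1 and t >= C / e *)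
move=> beta0 e0; set b := beta / 2; set g := 2 / b; set C := ln 6 + g.
have b0 : 0 < b by rewrite divr_gt0.
have g0 : 0 < g by rewrite divr_gt0.
have ln6 : 0 <= ln (6 : R) by rewrite ln_ge0 // ler1n.
near=> n.
have n0 : (0 < n)%N by near: n; exists 1%N.
have t1 : 1 <= n%:R `^ b by near: n; exact: powR_nat_ge_near _ b0.
have tC : C / e <= n%:R `^ b by near: n; exact: powR_nat_ge_near _ b0.
set t := n%:R `^ b in t1 tC *.
have tt : n%:R `^ beta = t * t.
  by rewrite -expr2 -powR_mulrn ?powR_ge0 // -powRrM divfK ?pnatr_eq0.
have lnn : 2 * ln n%:R <= g * t.
  have n0R : 0 < n%:R :> R by rewrite ltr0n.
  have := ln_le_powR n0R b0.
  by rewrite -/t /g mulrAC -mulrA; lra.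
have ln6t : ln 6 <= ln 6 * t by nra.
have Ct : C * t <= t * e * t.
  by rewrite ler_pdivrMr // in tC; apply: ler_wpM2r => //; lra.
have := ln_kac_scale_le R n0; rewrite tt ler_pdivrMr ?mulr_gt0; try lra.
move: Ct; rewrite /C mulrDl; lra.
Unshelve. all: by end_near. Qed.

Section ReturnTime.
Variables (R : realType) (A : finType) (a0 : A).
Local Notation T := (shiftspace a0).
Implicit Types (x : T) (beta : R).

Lemma return_time_le n x k : (0 < k)%N ->
  (forall i, (i < n)%N -> x (k + i)%N = x i) ->
  (@return_time _ _ R n x <= (k%:R)%:E)%E.
Proof. by move=> k0 hk; apply: ereal_inf_lbound; exists k. Qed.

Lemma return_time_ge1 n x : (1 <= @return_time _ _ R n x)%E.
Proof. by apply: le_ereal_inf_tmp => _ [k [k0 _] <-]; rewrite lee_fin ler1n. Qed.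

Lemma log_return_ge0 x beta n : (0 <= log_return x beta n)%E.
Proof.
rewrite /log_return; have := return_time_ge1 n x.
case: (return_time n x) => // r; rewrite !lee_fin => r1.
by rewrite divr_ge0 ?powR_ge0 // ln_ge0.
Qed.

Lemma log_returnE_le x beta n k : (0 < k)%N ->
  (forall i, (i < n)%N -> x (k + i)%N = x i) ->
  exists r, [/\ 1 <= r, r <= k%:R & log_return x beta n = (ln r / n%:R `^ beta)%:E].
Proof.
move=> k0 hk; have := return_time_le k0 hk; have := return_time_ge1 n x.
rewrite /log_return; case: (return_time n x) => // r.
by rewrite !lee_fin => r1 rk; exists r.
Qed.

Lemma log_return_const x beta : (forall i, x i.+1 = x i) ->
  limn_esup (log_return x beta) = 0%E.
Proof.
move=> hx; apply: limn_esup_eq0 => [n|e e0]; first exact: log_return_ge0.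
apply: nearW => n.
have [r [r1 r1' ->]] := @log_returnE_le x beta n 1 isT (fun i _ => hx i).
have -> : r = 1 by apply/eqP; rewrite eq_le r1 r1'.
by rewrite ln1 mul0r lee_fin ltW.
Qed.
End ReturnTime.

Section Recurrence.
Variables (R : realType) (A : finType) (a0 : A).
Local Notation T := (shiftspace a0).
Local Notation cyl := (@cyl A a0).
Local Notation word_seq := (@word_seq A a0 _).
Variables (X : set T) (mu : probability T R).
Hypothesis mu_shift : forall B : set T, measurable B -> mu (@sshift _ a0 @^-1` B) = mu B.
Hypothesis mX : measurable X.
Hypothesis muX1 : mu X = 1%E.

Lemma measure_shiftn_preimage j N (S : set T) :
  determined_by N S -> mu (shiftn j @^-1` S) = mu S.
Proof.
move=> hS; elim: j => [|j IH].
  by congr (mu _); apply/seteqP; split => x; rewrite /= shiftn0.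
have -> : shiftn j.+1 @^-1` S = @sshift _ a0 @^-1` (shiftn j @^-1` S).
  by apply/seteqP; split => x; rewrite /= shiftnS.
by rewrite mu_shift ?IH //; apply: determined_measurable; exact: determined_shiftn hS.
Qed.

Lemma kac_bound n (B : set T) m :
  determined_by n B -> (mu (late_return B m) *+ m <= 1)%E.
Proof.
move=> hB; have hL := determined_late_return m hB.
pose D (j : 'I_m) := shiftn j @^-1` late_return B m.
have mD j : measurable (D j) by exact: determined_measurable (determined_shiftn j hL).
have <- : (\sum_(j < m) mu (D j))%E = (mu (late_return B m) *+ m)%E.
  rewrite (eq_bigr (fun=> mu (late_return B m))); first by rewrite sumr_const card_ord.
  by move=> j _; rewrite /D (measure_shiftn_preimage j hL).
rewrite -measure_semi_additive_ord //.
- by apply: probability_le1; apply: bigsetU_measurable => j _.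
- exact: trivIset_late_return.
- by apply: bigsetU_measurable => j _.
Qed.

Definition pmass n (x : T) : R := fine (mu (P X n x)).

Lemma measurable_P n (x : T) : measurable (P X n x).
Proof. exact: measurableI mX (cyl_measurable _ _). Qed.

Lemma pmassE n x : mu (P X n x) = (pmass n x)%:E.
Proof. by rewrite fineK // fin_num_measure //; exact: measurable_P. Qed.

Lemma pmass_ge0 n x : 0 <= pmass n x.
Proof. by rewrite fine_ge0. Qed.

Lemma pmass_le1 n x : pmass n x <= 1.
Proof. by rewrite -lee_fin -pmassE probability_le1 //; exact: measurable_P. Qed.

Lemma neglog_meas_finE (x : T) beta n :
  (neglog_meas mu X x beta n < +oo)%E ->
  0 < pmass n x /\ neglog_meas mu X x beta n = (- ln (pmass n x) / n%:R `^ beta)%:E.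
Proof.
rewrite /neglog_meas; set M := (M in (if M == 0%E then _ else _)).
have -> : M = (pmass n x)%:E by exact: pmassE.
case: ifPn => [_|a_neq0 _]; first by rewrite ltxx.
by split => //; rewrite lt_def pmass_ge0 andbT; apply: contra a_neq0 => /eqP ->.
Qed.

Lemma pmass_gt_half (x : T) beta : beta <= 0 ->
  limn_esup (neglog_meas mu X x beta) = 0%E ->
  \forall n \near \oo, 2^-1 < pmass n x.
Proof.
move=> beta0 hF.
have ln2 : 0 < ln (2 : R) by rewrite ln_gt0 // ltr1n.
near=> n.
have hn : (neglog_meas mu X x beta n < (ln 2 / 2)%:E)%E.
  by near: n; apply: limn_esup_lt_near; rewrite hF lte_fin divr_gt0.
have n0 : (0 < n)%N by near: n; exists 1%N.
have [apos hE] := neglog_meas_finE (lt_trans hn (ltry _)).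
move: hn; rewrite hE lte_fin; set a := pmass n x => h.
have p0 : 0 < n%:R `^ beta by rewrite powR_gt0 // ltr0n.
have p1 : n%:R `^ beta <= 1.
  by have := ler_powR (_ : 1 <= n%:R) beta0; rewrite powRr0 ler1n; apply.
have l0 : 0 <= - ln a by rewrite oppr_ge0 ln_le0 // pmass_le1.
have ha : - ln a <= - ln a / n%:R `^ beta by rewrite ler_pdivlMr //; nra.
have : ln (2^-1) < ln a by rewrite lnV ?posrE //; lra.
by rewrite ltr_ln ?posrE.
Unshelve. all: by end_near. Qed.

Lemma const_of_pmass_gt_half (x : T) :
  (\forall n \near \oo, 2^-1 < pmass n x) -> forall i, x i.+1 = x i.
Proof.
move=> [N _ hN] i; set n := maxn N i.+1.
have Nn : (N <= n)%N by rewrite leq_maxl.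
have ltin : (i < n)%N by rewrite leq_maxr.
have hS := determined_shiftn 1 (cyl_determined n x).
have hmass : (1 < mu (P X n.+1 x) + mu (shiftn 1 @^-1` (cyl n x : set T)))%E.
  rewrite (measure_shiftn_preimage 1 (cyl_determined n x)).
  have : (mu (P X n x) <= mu (cyl n x : set T))%E.
    apply: le_measure; rewrite ?inE //;
      by [exact: measurable_P | exact: cyl_measurable | move=> z []].
  rewrite !pmassE => hle; apply: lt_le_trans (leeD2l _ hle).
  by rewrite -EFinD lte_fin; have := hN _ (leqW Nn); have := hN _ Nn; lra.
have [y [[_ cy] sy]] := probability_setI_neq0 (measurable_P n.+1 x)
  (determined_measurable hS) hmass.
by rewrite -cy ?ltnS //; exact: sy i ltin.
Qed.

Definition return_bound n (x : T) : nat :=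
  (Num.truncn (kac_scale n / pmass n x)).+1.

Definition long_return n : set T :=
  \bigcup_(w in [set: {ffun 'I_n -> A}])
    (X `&` late_return (cyl n (word_seq w)) (return_bound n (word_seq w))).

Lemma measurable_late_return_cyl n (e : T) m :
  measurable (X `&` late_return (cyl n e) m).
Proof.
exact: measurableI mX (determined_measurable (determined_late_return m (cyl_determined n e))).
Qed.

Lemma measurable_long_return n : measurable (long_return n).
Proof.
apply: fin_bigcup_measurable; first exact: finite_finset.
by move=> w _; exact: measurable_late_return_cyl.
Qed.

Lemma measure_late_return_cyl n (e : T) :
  (mu (X `&` late_return (cyl n e) (return_bound n e)) <=
   mu (P X n e) * ((kac_scale n)^-1)%:E)%E.
Proof.
set m := return_bound n e.
have mL : measurable (late_return (cyl n e) m).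
  exact: determined_measurable (determined_late_return m (cyl_determined n e)).
have le_P : (mu (X `&` late_return (cyl n e) m) <= mu (P X n e))%E.
  apply: le_measure; rewrite ?inE //;
    by [exact: measurable_late_return_cyl | exact: measurable_P | move=> y [Xy []]].
rewrite pmassE; have [a0'|a_neq0] := eqVneq (pmass n e) 0.
  by move: le_P; rewrite pmassE a0' mul0e.
have apos : 0 < pmass n e by rewrite lt_def a_neq0 pmass_ge0.
apply: (@le_trans _ _ (mu (late_return (cyl n e) m))).
  apply: le_measure; rewrite ?inE //;
    by [exact: measurable_late_return_cyl | move=> y []].
set b := fine (mu (late_return (cyl n e) m)).
have muL : mu (late_return (cyl n e) m) = b%:E by rewrite fineK ?fin_num_measure.
have b0 : 0 <= b by rewrite fine_ge0.
have := kac_bound m (cyl_determined n e).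
rewrite muL -EFin_natmul lee_fin -mulr_natr => hk.
have hm : kac_scale n / pmass n e < m%:R by rewrite truncnS_gt.
rewrite ltr_pdivrMr // in hm.
rewrite -EFinM lee_fin ler_pdivlMr ?kac_scale_gt0 //.
nra.
Qed.

Lemma measure_long_return n : (mu (long_return n) <= ((kac_scale n)^-1)%:E)%E.
Proof.
have mL (w : {ffun 'I_n -> A}) :=
  measurable_late_return_cyl n (word_seq w) (return_bound n (word_seq w)).
have disj (F : {ffun 'I_n -> A} -> set T) :
    (forall w, F w `<=` X `&` cyl n (word_seq w)) -> trivIset setT F.
  by move=> hF; apply: trivIset_word_cyl => w y /hF [].
rewrite /long_return (measure_fin_bigcup mu finite_finset _ (fun w _ => mL w)); last first.
  by apply: disj => w y [Xy []].
apply: le_trans (lee_fsum finite_finset (fun w _ => measure_late_return_cyl n (word_seq w))) _.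
rewrite -ge0_mule_fsuml // -(measure_fin_bigcup mu finite_finset).
- (* [measure_fin_bigcup] speaks about the content underlying [mu] *)
  have muX1' : ((mu : {content set T -> \bar R}) X = 1)%E := muX1.
  by rewrite bigcup_word_cyl muX1' mul1e.
- by apply: disj => w y.
- by move=> w _; exact: measurable_P.
Qed.

Lemma ae_eventually_short_return :
  {ae mu, forall x, \forall n \near \oo, ~ long_return n x}.
Proof.
exists (lim_sup_set long_return); split.
- apply: bigcapT_measurable => k; apply: bigcup_measurable => j _.
  exact: measurable_long_return.
- apply: lim_sup_set_cvg0; first exact: measurable_long_return.
  apply: (le_lt_trans (@lee_nneseries R (fun n => mu (long_return n))
           (fun n => ((kac_scale n)^-1)%:E) xpredT 0 _ _)).
  + by move=> i _ _; exact: measure_ge0.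
  + by move=> n _; exact: measure_long_return.
  by apply: le_lt_trans (kac_scale_series_le1 R) _; rewrite ltry.
- move=> x /= hx N _; apply: contrapT => hN; apply: hx.
  by exists N => // n /= Nn Ln; apply: hN; exists n.
Qed.

Lemma return_bound_word_of n (x : T) :
  return_bound n (word_seq (word_of n x)) = return_bound n x.
Proof. by rewrite /return_bound /pmass /P cyl_word_of. Qed.

Lemma short_return_exists n (x : T) : X x -> ~ long_return n x ->
  exists k, [/\ (0 < k)%N, (k < return_bound n x)%N &
                forall i, (i < n)%N -> x (k + i)%N = x i].
Proof.
move=> Xx nL; apply: contrapT => hk; apply: nL.
exists (word_of n x) => //; rewrite return_bound_word_of cyl_word_of.
by split => //; split => // k k0 kb cy; apply: hk; exists k.
Qed.

(* R_n(x) < return_bound n x <= K_n / mu(P_n(x)) off the long-return set *)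
Lemma log_return_le_pmass n (x : T) beta : X x -> ~ long_return n x ->
  0 < pmass n x ->
  (log_return x beta n <=
   ((ln (kac_scale n) - ln (pmass n x)) / n%:R `^ beta)%:E)%E.
Proof.
move=> Xx nL apos.
have [k [k0 kb hk]] := short_return_exists Xx nL.
have [r [r1 rk ->]] := log_returnE_le beta k0 hk.
have r0 : 0 < r by lra.
have K0 := kac_scale_gt0 R n.
rewrite lee_fin; apply: ler_wpM2r; first by rewrite invr_ge0 powR_ge0.
rewrite -ln_div ?posrE // ler_ln ?posrE ?divr_gt0 //.
apply: le_trans rk _; move: kb; rewrite /return_bound ltnS -(ler_nat R) => kb.
by apply: le_trans kb _; rewrite truncn_le divr_ge0 // ltW.
Qed.

Lemma log_return_limsup0 (x : T) beta : X x -> 0 < beta ->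
  limn_esup (neglog_meas mu X x beta) = 0%E ->
  (\forall n \near \oo, ~ long_return n x) ->
  limn_esup (log_return x beta) = 0%E.
Proof.
move=> Xx beta0 hF hshort.
apply: limn_esup_eq0 => [n|e e0]; first exact: log_return_ge0.
near=> n.
have hn : (neglog_meas mu X x beta n < (e / 2)%:E)%E.
  by near: n; apply: limn_esup_lt_near; rewrite hF lte_fin divr_gt0.
have [apos hE] := neglog_meas_finE (lt_trans hn (ltry _)).
apply: le_trans (log_return_le_pmass beta Xx _ apos) _; first by near: n.
have : ln (kac_scale n) / n%:R `^ beta <= e / 2.
  by near: n; apply: ln_kac_scale_small; rewrite ?divr_gt0.
move: hn; rewrite hE !lte_fin lee_fin mulrBl mulNr; lra.
Unshelve. all: by end_near. Qed.
End Recurrence.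

Theorem lemma4p6 (R : realType) (A : finType) (a0 : A)
  (X : set (shiftspace a0)) (mu : probability (shiftspace a0) R) (c : R) :
  subshift X ->
  mu X = 1%E ->
  (forall B : set (shiftspace a0), measurable B ->
     mu (@sshift _ a0 @^-1` B) = mu B) ->
  {ae mu, forall x, X x ->
     critical_value (fun beta => limn_esup (neglog_meas mu X x beta)) c} ->
  {ae mu, forall x, X x ->
     forall beta, c < beta -> limn_esup (log_return x beta) = 0%E}.
Proof.
move=> [cX _] muX1 mu_shift hcrit.
have mX := seq_closed_measurable cX.
have hX : {ae mu, forall x, X x}.
  exists (~` X); split => //; first exact: measurableC.
  by rewrite probability_setC // muX1 subee.
apply: filterS3 hcrit (ae_eventually_short_return mu_shift mX muX1) hX.
move=> x hcrit_x hshort Xx _ beta c_beta.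
have hF := (hcrit_x Xx).2 beta c_beta.
have [beta0|beta0] := ltP 0 beta; first exact: (log_return_limsup0 mX Xx beta0 hF hshort).
exact/log_return_const/(const_of_pmass_gt_half mu_shift mX)/(pmass_gt_half mX beta0 hF).
Qed.
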